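(* Let $\mathsf{Obs}$ be an observation function over $\Sigma$ and $\Omega$ a distribution of $\Sigma$ with $\Omega\models\mathsf{Obs}$. Let $\Sigma_i\in\Omega$ and let $\sigma\in\Sigma^\star$ be such that $\sigma|_{\Sigma_i}\notin\mathsf{Dom}(\mathsf{Obs}_{\Sigma_i})$ and, for every $\Sigma_j\in\Omega\setminus\{\Sigma_i\}$, $\sigma|_{\Sigma_j}\in\mathsf{Dom}(\mathsf{Obs}_{\Sigma_j})$ and $\mathsf{Obs}_{\Sigma_j}(\sigma|_{\Sigma_j})=+$. Then for each $b\in\{+,-\}$, $\Omega\models\mathsf{Obs}\cup\{(\sigma,b)\}$.
   Context: $\sigma|_{\Sigma'}$ denotes projection of a word onto $\Sigma'$ (subsequence of symbols in $\Sigma'$), lifted elementwise to sets. A distribution of $\Sigma$ is a finite set $\Omega=\{\Sigma_1,\dots,\Sigma_n\}$ of subsets of $\Sigma$ with union $\Sigma$. An observation function over $\Sigma$ is a partial function $\mathsf{Obs}:\Sigma^\star\rightharpoonup\{+,-\}$ with finite domain; it is identified with the set of pairs $\{(\sigma,\mathsf{Obs}(\sigma))\}$, so $\mathsf{Obs}\cup\{(\sigma,b)\}$ (for $\sigma\notin\mathsf{Dom}(\mathsf{Obs})$) is the extension mapping $\sigma$ to $b$. $\mathcal L\models\mathsf{Obs}$ means: for all $\sigma\in\mathsf{Dom}(\mathsf{Obs})$, $\sigma\in\mathcal L\iff\mathsf{Obs}(\sigma)=+$. $\mathcal L$ is a product language over $\Omega$ if $\mathcal L=\{w\mid\forall i.\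 w|_{\Sigma_i}\in\mathcal L_i\}$ for some $\mathcal L_i\subseteq\Sigma_i^\star$. $\Omega\models\mathsf{Obs}$ means there is a product language $\mathcal L$ over $\Omega$ with $\mathcal L\models\mathsf{Obs}$. For $\Sigma'\subseteq\Sigma$, the local observation function $\mathsf{Obs}_{\Sigma'}$ has domain $\mathsf{Dom}(\mathsf{Obs})|_{\Sigma'}$, and $\mathsf{Obs}_{\Sigma'}(\sigma')=+$ iff some $\sigma\in\mathsf{Dom}(\mathsf{Obs})$ has $\sigma|_{\Sigma'}=\sigma'$ and $\mathsf{Obs}(\sigma)=+$, else $-$. *)

From HB Require Import structures.
From mathcomp Require Import all_boot.
From mathcomp Require Import finmap.
Set Implicit Arguments. Unset Strict Implicit. Unset Printing Implicit Defensive.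
Local Open Scope fmap_scope.

(* Words over a finite alphabet Sigma are sequences [seq Sigma].
   Observations: + is [true], - is [false]. *)

Definition proj (Sigma : finType) (S : {set Sigma}) (w : seq Sigma) : seq Sigma :=
  [seq a <- w | a \in S].

Definition distribution (Sigma : finType) (Omega : {set {set Sigma}}) : Prop :=
  \bigcup_(S in Omega) S = [set: Sigma].

Definition obs_fun (Sigma : finType) := {fmap seq Sigma -> bool}.

Definition lang_models (Sigma : finType) (L : seq Sigma -> Prop)
    (Obs : obs_fun Sigma) : Prop :=
  forall (w : seq Sigma) (b : bool), Obs.[? w] = Some b -> (L w <-> b = true).

Definition product_lang (Sigma : finType) (Omega : {set {set Sigma}})
    (L : seq Sigma -> Prop) : Prop :=
  exists Ls : {set Sigma} -> seq Sigma -> Prop,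
    (forall S, S \in Omega -> forall w, Ls S w -> all (fun a => a \in S) w) /\
    (forall w, L w <-> (forall S, S \in Omega -> Ls S (proj S w))).

Definition dist_models (Sigma : finType) (Omega : {set {set Sigma}})
    (Obs : obs_fun Sigma) : Prop :=
  exists L : seq Sigma -> Prop, product_lang Omega L /\ lang_models L Obs.

(* local observation function Obs_{S}: None outside its domain
   Dom(Obs)|_S; Some true iff some positive observation projects onto w. *)
Definition local_obs (Sigma : finType) (Obs : obs_fun Sigma) (S : {set Sigma})
    (w : seq Sigma) : option bool :=
  if has (fun s => proj S s == w) (domf Obs) then
    Some (has (fun s => (proj S s == w) && (Obs.[? s] == Some true)) (domf Obs))
  else None.

From HB Require Import structures.
From mathcomp Require Import all_boot.
From mathcomp Require Import finmap.
Set Implicit Arguments. Unset Strict Implicit. Unset Printing Implicit Defensive.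
Local Open Scope fmap_scope.

(* Take a product presentation (L_S) of a language modelling Obs and change
   only the component on Si: it now accepts sigma|Si exactly when b = +.
   No observed word projects to sigma|Si, so all old observations are kept.
   The new product accepts sigma iff b = +: the Si-component decides, and every
   other component already accepts sigma|Sj, being the projection of some
   positively observed word. *)

Section ProductUpdate.

Variable Sigma : finType.
Implicit Types (S : {set Sigma}) (w u : seq Sigma) (Obs : obs_fun Sigma).

Lemma proj_all S w : all (fun a => a \in S) (proj S w).
Proof. by rewrite /proj all_filter; apply/allP => a _; apply/implyP. Qed.

Lemma local_obs_None Obs S u :
  local_obs Obs S u = None -> forall w, w \in domf Obs -> proj S w != u.
Proof.
rewrite /local_obs; case: hasP => // Hnone _ w wObs.
by apply/eqP => Ew; apply: Hnone; exists w; rewrite ?Ew.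
Qed.

Lemma local_obs_Some_true Obs S u :
  local_obs Obs S u = Some true ->
  exists2 w, proj S w = u & Obs.[? w] = Some true.
Proof.
rewrite /local_obs; case: ifP => // _ [] /hasP [w _ /andP [/eqP Ew /eqP Ow]].
by exists w.
Qed.

Lemma product_lang_of (Omega : {set {set Sigma}}) Ls :
  (forall S, S \in Omega -> forall w, Ls S w -> all (fun a => a \in S) w) ->
  product_lang Omega (fun w => forall S, S \in Omega -> Ls S (proj S w)).
Proof. by move=> LsS; exists Ls. Qed.

Lemma lang_models_set (L L' : seq Sigma -> Prop) Obs w0 b :
  lang_models L Obs ->
  (forall w, w \in domf Obs -> L' w <-> L w) ->
  (L' w0 <-> b = true) ->
  lang_models L' Obs.[w0 <- b].
Proof.
move=> LObs L'L L'w0 w c; rewrite fnd_set; case: eqP => [-> [<-] //|_ Ow].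
by rewrite L'L; [exact: LObs | case/fndSomeP: Ow].
Qed.

End ProductUpdate.

Theorem mainTheorem6 (Sigma : finType) (Obs : obs_fun Sigma)
    (Omega : {set {set Sigma}}) :
  distribution Omega ->
  dist_models Omega Obs ->
  forall (Si : {set Sigma}) (sigma : seq Sigma),
    Si \in Omega ->
    local_obs Obs Si (proj Si sigma) = None ->
    (forall Sj, Sj \in Omega -> Sj != Si ->
       local_obs Obs Sj (proj Sj sigma) = Some true) ->
    forall b : bool, dist_models Omega Obs.[sigma <- b].
Proof.
move=> _ [L [[Ls [LsS LE]] LObs]] Si sigma SiO unobs_i pos_j b.
pose Ls' S u := if (S == Si) && (u == proj Si sigma) then b = true else Ls S u.
exists (fun w => forall S, S \in Omega -> Ls' S (proj S w)); split.
  apply: product_lang_of => S SO w; rewrite /Ls'.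
  by case: andP => [[/eqP -> /eqP ->] _|_]; [exact: proj_all | exact: LsS].
apply: (lang_models_set LObs).
  move=> w wObs; rewrite LE; split=> Lw S SO; move: (Lw S SO); rewrite /Ls';
    by case: eqP => //= ->; rewrite (negbTE (local_obs_None unobs_i wObs)).
split=> [/(_ Si SiO)|bt S SO]; first by rewrite /Ls' !eqxx.
rewrite /Ls'; case: eqP => [->|/eqP SnSi] /=; first by rewrite eqxx.
have [w <- /LObs Lw] := local_obs_Some_true (pos_j S SO SnSi).
exact: (proj1 (LE w) (proj2 Lw erefl) S SO).
Qed.
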